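(* Let $p\ge 1$ and $c>0$ be constants and let $a>0$. Let $x_a$ denote the unique (maximal) solution of the initial value problem $$x'''+c\,x^p\, x''=0,\qquad x(0)=0=x'(0),\quad x''(0)=a.$$ Then $x_a$ is defined for all $t\ge 0$. *)

From Stdlib Require Import Reals.
From Coquelicot Require Import Coquelicot.
Open Scope R_scope.

(* |y|^p for real exponent p (with 0^p = 0, since p >= 1 in the application).
   Solutions of the IVP are nonnegative, so this only fixes a convention
   for x^p off the physically relevant region. *)
Definition powabs (y p : R) : R :=
  if Req_EM_T y 0 then 0 else Rpower (Rabs y) p.

From Stdlib Require Import Reals Lra Lia Psatz.
From Coquelicot Require Import Coquelicot.
Open Scope R_scope.

(* Integrating the equation once gives [x'' = a exp (- c \int_0^t x^p)], so a solution is a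
   fixed point of the operator integrating this expression twice.  For [t >= 0] we have
   [0 < x'' <= a], hence [|x t| <= a t^2]: the solution cannot blow up in forward time.
   On [[alpha, 0]] with [alpha = - 1 / (1 + a e^c)] we keep [|x| <= 1], hence [x'' <= a e^c].
   On these bounded sets [|.|^p] is Lipschitz, so on every [[alpha, N]] the operator is a
   contraction of ratio [1/2] for the weighted norm [sup |f s| exp (- L |s|)] with [L]
   large; the Picard iterates converge locally uniformly to a continuous fixed point,
   which solves the problem on [(alpha, +oo)]. *)

Lemma exp_le_exp x y : x <= y -> exp x <= exp y.
Proof. intros [H|H]; [left; apply exp_increasing; exact H | subst; lra]. Qed.

Lemma exp_ge1 x : 0 <= x -> 1 <= exp x.
Proof. intros H; rewrite <- exp_0; apply exp_le_exp; exact H. Qed.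

Lemma Rpower_gt0 x y : 0 < Rpower x y.
Proof. apply exp_pos. Qed.

Lemma exp_lipschitz B u v : u <= B -> v <= B -> Rabs (exp u - exp v) <= exp B * Rabs (u - v).
Proof.
  assert (lt_case : forall x y, x < y -> y <= B -> Rabs (exp x - exp y) <= exp B * Rabs (x - y)).
  { intros x y hxy hy.
    destruct (MVT_cor2 exp exp x y hxy) as [d [Hd1 Hd2]].
    { intros d _. apply derivable_pt_lim_exp. }
    assert (exp d <= exp B) by (apply exp_le_exp; lra).
    pose proof (exp_pos d).
    rewrite <- Rabs_Ropp, Ropp_minus_distr, Hd1, Rabs_mult, (Rabs_pos_eq (exp d)) by lra.
    rewrite <- Rabs_Ropp with (x := x - y), Ropp_minus_distr.
    apply Rmult_le_compat_r; [apply Rabs_pos | lra]. }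
  intros hu hv. destruct (Rtotal_order u v) as [H|[H|H]].
  - apply lt_case; lra.
  - subst. rewrite !Rminus_diag, Rabs_R0. pose proof (exp_pos B); lra.
  - rewrite <- Rabs_Ropp, Ropp_minus_distr, <- (Rabs_Ropp (u - v)), Ropp_minus_distr.
    apply lt_case; lra.
Qed.

Lemma Rmax_idem_l m t : Rmax m (Rmax m t) = Rmax m t.
Proof. unfold Rmax; repeat destruct Rle_dec; lra. Qed.

Lemma continuous_Rmax_l m t : continuous (fun t => Rmax m t) t.
Proof.
  apply filterlim_locally. intros eps. exists eps. intros y Hy.
  change (Rabs (y - t) < eps) in Hy. change (Rabs (Rmax m y - Rmax m t) < eps).
  unfold Rmax; destruct (Rle_dec m y); destruct (Rle_dec m t);
  apply Rabs_def2 in Hy; apply Rabs_def1; lra.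
Qed.

Section Powabs.
Variable p : R.
Hypothesis hp : 1 <= p.

Lemma powabs_ge0 y : 0 <= powabs y p.
Proof. unfold powabs; destruct Req_EM_T; [lra | left; apply Rpower_gt0]. Qed.

Lemma powabs0 : powabs 0 p = 0.
Proof. unfold powabs; destruct Req_EM_T; [reflexivity | lra]. Qed.

Lemma powabs_gt0 y : 0 < y -> powabs y p = Rpower y p.
Proof. intros h; unfold powabs; destruct Req_EM_T; [lra | rewrite Rabs_pos_eq by lra; reflexivity]. Qed.

Lemma powabs_Rabs y : powabs (Rabs y) p = powabs y p.
Proof.
  unfold powabs. destruct (Req_EM_T y 0) as [H|H]; destruct (Req_EM_T (Rabs y) 0) as [H'|H'].
  - reflexivity.
  - subst; rewrite Rabs_R0 in H'; lra.
  - exfalso; apply H, (Rabs_eq_0 y), H'.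
  - rewrite Rabs_Rabsolu; reflexivity.
Qed.

Lemma powabs_le_Rabs y : Rabs y <= 1 -> powabs y p <= Rabs y.
Proof.
  intros hy. unfold powabs. destruct Req_EM_T as [H|H]; [apply Rabs_pos|].
  assert (hy0 : 0 < Rabs y) by (apply Rabs_pos_lt; exact H).
  assert (hl : ln (Rabs y) <= 0).
  { rewrite <- ln_1. destruct hy as [hy|hy]; [left; apply ln_increasing; lra | rewrite hy; lra]. }
  unfold Rpower. rewrite <- (exp_ln (Rabs y)) at 2 by exact hy0.
  apply exp_le_exp. nra.
Qed.

Lemma powabs_continuous y : continuous (fun x => powabs x p) y.
Proof.
  destruct (Req_EM_T y 0) as [Hy|Hy].
  - subst y. apply filterlim_locally. intros eps.
    exists (mkposreal (Rmin 1 eps) ltac:(apply Rmin_pos; [lra | apply cond_pos])).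
    intros x Hx. change (Rabs (powabs x p - powabs 0 p) < eps).
    change (Rabs (x - 0) < Rmin 1 eps) in Hx.
    rewrite powabs0, Rminus_0_r in *.
    pose proof (Rmin_l 1 eps). pose proof (Rmin_r 1 eps).
    pose proof (powabs_le_Rabs x ltac:(lra)). pose proof (powabs_ge0 x).
    rewrite Rabs_pos_eq by lra. lra.
  - assert (hy0 : 0 < Rabs y) by (apply Rabs_pos_lt; exact Hy).
    apply (continuous_ext_loc _ (fun x : R => exp (p * ln (Rabs x)))).
    + exists (mkposreal (Rabs y) hy0). intros x Hx.
      change (Rabs (x - y) < Rabs y) in Hx.
      unfold powabs. destruct Req_EM_T as [E|E]; [|reflexivity].
      subst x. rewrite Rminus_0_l, Rabs_Ropp in Hx. lra.
    + apply (@ex_derive_continuous R_AbsRing R_NormedModule). auto_derive. tauto.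
Qed.

Lemma powabs_lipschitz_nonneg M u v : 0 < M -> 0 <= u -> u <= v -> v <= M ->
  0 <= powabs v p - powabs u p <= p * Rpower M (p - 1) * (v - u).
Proof.
  intros hM hu huv hv.
  assert (hRM : 0 < Rpower M (p - 1)) by apply Rpower_gt0.
  destruct huv as [huv|huv]; [|subst; lra].
  destruct hu as [hu|hu].
  - rewrite !powabs_gt0 by lra.
    destruct (MVT_cor2 (fun x => Rpower x p) (fun x => p * Rpower x (p - 1)) u v huv)
      as [d [Hd1 Hd2]].
    { intros d Hd. apply derivable_pt_lim_power. lra. }
    rewrite Hd1.
    assert (Rpower d (p - 1) <= Rpower M (p - 1)) by (apply Rle_Rpower_l; lra).
    pose proof (Rpower_gt0 d (p - 1)).
    split; [apply Rmult_le_pos; [apply Rmult_le_pos|]; lra|].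
    apply Rmult_le_compat_r; [lra|]. apply Rmult_le_compat_l; lra.
  - subst u. rewrite powabs0, powabs_gt0, !Rminus_0_r by lra.
    assert (Hv : Rpower v p = v * Rpower v (p - 1)).
    { rewrite <- (Rpower_1 v) at 2 by lra. rewrite <- Rpower_plus. f_equal; ring. }
    assert (Rpower v (p - 1) <= Rpower M (p - 1)) by (apply Rle_Rpower_l; lra).
    pose proof (Rpower_gt0 v (p - 1)).
    rewrite Hv. split; [apply Rmult_le_pos; lra|].
    apply Rle_trans with (v * Rpower M (p - 1)); [apply Rmult_le_compat_l; lra|].
    rewrite (Rmult_comm v). apply Rmult_le_compat_r; [lra|].
    rewrite <- (Rmult_1_l (Rpower M (p - 1))) at 1. apply Rmult_le_compat_r; lra.
Qed.

Lemma powabs_lipschitz M y1 y2 : 0 < M -> Rabs y1 <= M -> Rabs y2 <= M ->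
  Rabs (powabs y1 p - powabs y2 p) <= p * Rpower M (p - 1) * Rabs (y1 - y2).
Proof.
  intros hM h1 h2.
  assert (hk : 0 <= p * Rpower M (p - 1)) by (pose proof (Rpower_gt0 M (p - 1)); nra).
  pose proof (Rabs_triang_inv2 y1 y2) as Hd.
  rewrite <- (powabs_Rabs y1), <- (powabs_Rabs y2).
  destruct (Rle_dec (Rabs y1) (Rabs y2)) as [H|H].
  - pose proof (powabs_lipschitz_nonneg M _ _ hM (Rabs_pos y1) H h2).
    rewrite Rabs_left1 by lra. rewrite Rabs_left1 in Hd by lra.
    assert (p * Rpower M (p - 1) * (Rabs y2 - Rabs y1) <= p * Rpower M (p - 1) * Rabs (y1 - y2))
      by (apply Rmult_le_compat_l; lra).
    lra.
  - pose proof (powabs_lipschitz_nonneg M (Rabs y2) (Rabs y1) hM (Rabs_pos y2) ltac:(lra) h1).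
    rewrite Rabs_pos_eq by lra. rewrite Rabs_pos_eq in Hd by lra.
    assert (p * Rpower M (p - 1) * (Rabs y1 - Rabs y2) <= p * Rpower M (p - 1) * Rabs (y1 - y2))
      by (apply Rmult_le_compat_l; lra).
    lra.
Qed.

End Powabs.

Definition continuous_everywhere (h : R -> R) := forall s, continuous h s.

Lemma ex_RInt_continuous_everywhere h a b : continuous_everywhere h -> ex_RInt h a b.
Proof. intros H. apply (@ex_RInt_continuous R_CompleteNormedModule). intros; apply H. Qed.

Lemma is_derive_RInt0 h t : continuous_everywhere h -> is_derive (fun t => RInt h 0 t) t (h t).
Proof.
  intros H. apply (is_derive_RInt h _ 0 t); [|apply H].
  exists (mkposreal 1 Rlt_0_1). intros y _.
  apply (@RInt_correct R_CompleteNormedModule), ex_RInt_continuous_everywhere, H.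
Qed.

Lemma continuous_everywhere_derive f df :
  (forall t, is_derive f t (df t)) -> continuous_everywhere f.
Proof. intros H t. apply (@ex_derive_continuous R_AbsRing R_NormedModule). eexists; apply H. Qed.

Lemma RInt0_swap h t : continuous_everywhere h -> RInt h 0 t = - RInt h t 0.
Proof.
  intros H. rewrite <- (@opp_RInt_swap R_CompleteNormedModule h t 0)
    by apply ex_RInt_continuous_everywhere, H.
  reflexivity.
Qed.

Lemma abs_RInt0_le_const h t B : continuous_everywhere h ->
  (forall s, Rmin 0 t <= s <= Rmax 0 t -> Rabs (h s) <= B) ->
  Rabs (RInt h 0 t) <= B * Rabs t.
Proof.
  intros H Hb. destruct (Rle_dec 0 t) as [Ht|Ht].
  - rewrite Rmin_left, Rmax_right in Hb by lra.
    pose proof (abs_RInt_le_const h 0 t B Ht (ex_RInt_continuous_everywhere h 0 t H) Hb).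
    rewrite (Rabs_pos_eq t) by lra. lra.
  - rewrite Rmin_right, Rmax_left in Hb by lra.
    rewrite RInt0_swap, Rabs_Ropp by exact H.
    pose proof (abs_RInt_le_const h t 0 B ltac:(lra) (ex_RInt_continuous_everywhere h t 0 H) Hb).
    rewrite (Rabs_left t) by lra. lra.
Qed.

Lemma RInt0_ge0 h t : continuous_everywhere h -> 0 <= t ->
  (forall s, 0 <= s <= t -> 0 <= h s) -> 0 <= RInt h 0 t.
Proof.
  intros H Ht Hp. apply RInt_ge_0; [exact Ht | apply ex_RInt_continuous_everywhere, H|].
  intros; apply Hp; lra.
Qed.

Lemma RInt0_exp_scal L e t : L <> 0 ->
  RInt (fun s => e * exp (L * s)) 0 t = e / L * (exp (L * t) - 1).
Proof.
  intros hL.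
  rewrite (is_RInt_unique _ 0 t (minus (e / L * exp (L * t)) (e / L * exp (L * 0)))).
  - rewrite Rmult_0_r, exp_0. unfold minus, plus, opp; simpl. ring.
  - apply (@is_RInt_derive R_CompleteNormedModule (fun s => e / L * exp (L * s))).
    + intros x _. auto_derive; [exact I|]. field. lra.
    + intros x _. apply (@ex_derive_continuous R_AbsRing R_NormedModule). auto_derive. exact I.
Qed.

Lemma abs_RInt0_le_exp h t L e : continuous_everywhere h -> 0 < L -> 0 <= e ->
  (forall s, Rmin 0 t <= s <= Rmax 0 t -> Rabs (h s) <= e * exp (L * Rabs s)) ->
  Rabs (RInt h 0 t) <= e / L * exp (L * Rabs t).
Proof.
  intros H hL he Hb.
  assert (Habs : continuous_everywhere (fun s => Rabs (h s)))
    by (intros s; apply continuous_Rabs_comp, H).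
  assert (0 <= e / L) by (apply Rdiv_le_0_compat; lra).
  assert (weight_integrable : forall L' u v, ex_RInt (fun s => e * exp (L' * s)) u v).
  { intros L' u v. apply (@ex_RInt_continuous R_CompleteNormedModule). intros z _.
    apply (@ex_derive_continuous R_AbsRing R_NormedModule). auto_derive. exact I. }
  destruct (Rle_dec 0 t) as [Ht|Ht].
  - rewrite Rmin_left, Rmax_right in Hb by lra.
    eapply Rle_trans; [apply abs_RInt_le; [exact Ht | apply ex_RInt_continuous_everywhere, H]|].
    eapply Rle_trans.
    + apply (RInt_le _ (fun s => e * exp (L * s)));
        [exact Ht | apply ex_RInt_continuous_everywhere, Habs | apply weight_integrable|].
      intros x Hx. rewrite <- (Rabs_pos_eq x) at 2 by lra. apply Hb; lra.
    + rewrite RInt0_exp_scal, (Rabs_pos_eq t) by lra.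
      pose proof (exp_pos (L * t)). nra.
  - rewrite Rmin_right, Rmax_left in Hb by lra.
    rewrite RInt0_swap, Rabs_Ropp by exact H.
    eapply Rle_trans; [apply abs_RInt_le; [lra | apply ex_RInt_continuous_everywhere, H]|].
    eapply Rle_trans.
    + apply (RInt_le _ (fun s => e * exp (- L * s)));
        [lra | apply ex_RInt_continuous_everywhere, Habs | apply weight_integrable|].
      intros x Hx. replace (- L * x) with (L * Rabs x) by (rewrite Rabs_left by lra; ring).
      apply Hb; lra.
    + assert (Hswap := RInt0_swap (fun s => e * exp (- L * s)) t
        ltac:(intros s; apply (@ex_derive_continuous R_AbsRing R_NormedModule); auto_derive; exact I)).
      rewrite RInt0_exp_scal in Hswap by lra.
      rewrite (Rabs_left t) by lra.
      pose proof (exp_pos (- L * t)).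
      replace (L * - t) with (- L * t) by ring.
      replace (RInt (fun s => e * exp (- L * s)) t 0) with (e / L * (exp (- L * t) - 1))
        by (rewrite <- (Ropp_involutive (RInt _ t 0)), <- Hswap; field; lra).
      nra.
Qed.

Definition exp_close (lo hi L e : R) (f g : R -> R) :=
  forall s, lo <= s <= hi -> Rabs (f s - g s) <= e * exp (L * Rabs s).

Lemma exp_close_RInt0 lo hi L e f g : lo <= 0 <= hi -> 0 < L -> 0 <= e ->
  continuous_everywhere f -> continuous_everywhere g -> exp_close lo hi L e f g ->
  exp_close lo hi L (e / L) (fun t => RInt f 0 t) (fun t => RInt g 0 t).
Proof.
  intros h0 hL he Hf Hg Hc t Ht.
  replace (RInt f 0 t - RInt g 0 t) with (RInt (fun s => f s - g s) 0 t)
    by (apply (@RInt_minus R_CompleteNormedModule); apply ex_RInt_continuous_everywhere; assumption).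
  apply abs_RInt0_le_exp; [intros s; apply (continuous_minus f g s); auto | exact hL | exact he |].
  intros s Hs. apply Hc. unfold Rmin, Rmax in Hs; destruct Rle_dec; lra.
Qed.

Lemma pow_half_ge0 n : 0 <= (1/2)^n.
Proof. apply pow_le; lra. Qed.

Lemma pow_half_small K eps : 0 < eps -> exists n, Rabs K * (1/2)^n < eps.
Proof.
  intros he.
  destruct (pow_lt_1_zero (1/2) ltac:(rewrite Rabs_pos_eq; lra) (eps / (Rabs K + 1))) as [n Hn].
  { apply Rdiv_lt_0_compat; [lra | pose proof (Rabs_pos K); lra]. }
  exists n. specialize (Hn n (le_n n)). rewrite Rabs_pos_eq in Hn by apply pow_half_ge0.
  pose proof (Rabs_pos K). pose proof (pow_half_ge0 n).
  apply Rmult_lt_compat_l with (r := Rabs K + 1) in Hn; [|lra].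
  replace ((Rabs K + 1) * (eps / (Rabs K + 1))) with eps in Hn by (field; lra).
  nra.
Qed.

Lemma le_of_le_geom x B K : (forall n, x <= B + K * (1/2)^n) -> x <= B.
Proof.
  intros H. destruct (Rle_dec x B) as [h|h]; [exact h | exfalso].
  destruct (pow_half_small K (x - B)) as [n Hn]; [lra|].
  specialize (H n). pose proof (Rle_abs K). pose proof (pow_half_ge0 n). nra.
Qed.

Lemma geometric_cauchy_cvg (u : nat -> R) K :
  (forall n, Rabs (u (S n) - u n) <= K * (1/2)^n) ->
  exists l : R, is_lim_seq u l /\ forall n, Rabs (l - u n) <= 2 * K * (1/2)^n.
Proof.
  intros Hstep.
  assert (hK : 0 <= K)
    by (specialize (Hstep O); pose proof (Rabs_pos (u 1%nat - u 0%nat)); simpl in Hstep; lra).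
  assert (Htail : forall n m, Rabs (u (n + m)%nat - u n) <= 2 * K * (1/2)^n).
  { intros n m.
    assert (Htel : Rabs (u (n + m)%nat - u n) <= 2 * K * ((1/2)^n - (1/2)^(n + m))).
    { induction m as [|m IH].
      - rewrite Nat.add_0_r, !Rminus_diag, Rabs_R0. lra.
      - rewrite Nat.add_succ_r. pose proof (Hstep (n + m)%nat).
        replace (u (S (n + m)) - u n)
          with ((u (S (n + m)) - u (n + m)%nat) + (u (n + m)%nat - u n)) by ring.
        eapply Rle_trans; [apply Rabs_triang|]. simpl pow. lra. }
    pose proof (pow_half_ge0 (n + m)). nra. }
  assert (Hcauchy : ex_finite_lim_seq u).
  { apply ex_lim_seq_cauchy_corr. intros eps.
    destruct (pow_half_small (4 * K) eps) as [n0 Hn0]; [apply cond_pos|].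
    rewrite Rabs_pos_eq in Hn0 by lra.
    exists n0. intros n m Hn Hm.
    pose proof (Htail n0 (n - n0)%nat). pose proof (Htail n0 (m - n0)%nat).
    replace (n0 + (n - n0))%nat with n in * by lia.
    replace (n0 + (m - n0))%nat with m in * by lia.
    replace (u n - u m) with ((u n - u n0) - (u m - u n0)) by ring.
    eapply Rle_lt_trans; [apply Rabs_triang|]. rewrite Rabs_Ropp. lra. }
  destruct Hcauchy as [l Hl]. exists l. split; [exact Hl|]. intros n.
  assert (Hlim : is_lim_seq (fun m => Rabs (u (m + n)%nat - u n)) (Rabs (l - u n))).
  { apply (is_lim_seq_abs _ (l - u n)).
    apply (is_lim_seq_minus' _ (fun _ => u n)); [|apply is_lim_seq_const].
    apply (is_lim_seq_incr_n u n l), Hl. }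
  assert (Hbound : forall m, Rabs (u (m + n)%nat - u n) <= 2 * K * (1/2)^n)
    by (intros m; rewrite Nat.add_comm; apply Htail).
  exact (is_lim_seq_le _ _ _ _ Hbound Hlim (is_lim_seq_const _)).
Qed.

Section Picard.
Variables p c a : R.
Hypothesis hp : 1 <= p.
Hypothesis hc : 0 < c.
Hypothesis ha : 0 < a.

Definition int_powabs (f : R -> R) t := RInt (fun s => powabs (f s) p) 0 t.
Definition picard_d2 f t := a * exp (- c * int_powabs f t).
Definition picard_d1 f t := RInt (picard_d2 f) 0 t.
Definition picard f t := RInt (picard_d1 f) 0 t.

Lemma continuous_everywhere_powabs f :
  continuous_everywhere f -> continuous_everywhere (fun s => powabs (f s) p).
Proof.
  intros H s. apply (continuous_comp f (fun y => powabs y p)); [apply H | apply powabs_continuous, hp].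
Qed.

Lemma is_derive_picard_d2 f t : continuous_everywhere f ->
  is_derive (picard_d2 f) t (- (c * powabs (f t) p * picard_d2 f t)).
Proof.
  intros H.
  assert (Hexp : is_derive (fun t => exp (- c * int_powabs f t)) t
                   ((- c * powabs (f t) p) * exp (- c * int_powabs f t))).
  { apply (is_derive_comp exp (fun t => - c * int_powabs f t)); [apply is_derive_exp|].
    apply is_derive_scal, (is_derive_RInt0 (fun s => powabs (f s) p)).
    apply continuous_everywhere_powabs, H. }
  replace (- (c * powabs (f t) p * picard_d2 f t))
    with (a * ((- c * powabs (f t) p) * exp (- c * int_powabs f t))) by (unfold picard_d2; ring).
  apply is_derive_scal, Hexp.
Qed.

Lemma continuous_everywhere_picard_d2 f :
  continuous_everywhere f -> continuous_everywhere (picard_d2 f).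
Proof. intros H. eapply continuous_everywhere_derive. intros t; apply is_derive_picard_d2, H. Qed.

Lemma is_derive_picard_d1 f t : continuous_everywhere f ->
  is_derive (picard_d1 f) t (picard_d2 f t).
Proof. intros H. apply is_derive_RInt0, continuous_everywhere_picard_d2, H. Qed.

Lemma continuous_everywhere_picard_d1 f :
  continuous_everywhere f -> continuous_everywhere (picard_d1 f).
Proof. intros H. eapply continuous_everywhere_derive. intros t; apply is_derive_picard_d1, H. Qed.

Lemma is_derive_picard f t : continuous_everywhere f -> is_derive (picard f) t (picard_d1 f t).
Proof. intros H. apply is_derive_RInt0, continuous_everywhere_picard_d1, H. Qed.

Lemma continuous_everywhere_picard f :
  continuous_everywhere f -> continuous_everywhere (picard f).
Proof. intros H. eapply continuous_everywhere_derive. intros t; apply is_derive_picard, H. Qed.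

Definition alpha := - / (1 + a * exp c).

Lemma alpha_bounds : -1 < alpha < 0 /\ a * exp c * (alpha * alpha) <= 1.
Proof.
  unfold alpha. pose proof (exp_pos c). set (u := a * exp c).
  assert (0 < u) by (unfold u; nra).
  assert (0 < / (1 + u)) by (apply Rinv_0_lt_compat; lra).
  assert (/ (1 + u) < 1) by (rewrite <- Rinv_1; apply Rinv_lt_contravar; lra).
  split; [lra|].
  replace (u * (- / (1 + u) * - / (1 + u))) with (u / ((1 + u) * (1 + u))) by (field; lra).
  apply Rle_div_l; nra.
Qed.

Definition admissible f := continuous_everywhere f /\
  (forall s, alpha <= s <= 0 -> Rabs (f s) <= 1) /\
  (forall s, 0 <= s -> Rabs (f s) <= a * (s * s)).

Lemma admissible_le f N s : admissible f -> 0 <= N -> alpha <= s <= N ->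
  Rabs (f s) <= 1 + a * (N * N).
Proof.
  intros [_ [Hneg Hpos]] hN Hs.
  assert (0 <= a * (N * N)) by (apply Rmult_le_pos; nra).
  destruct (Rle_dec s 0).
  - pose proof (Hneg s ltac:(lra)). lra.
  - pose proof (Hpos s ltac:(lra)).
    assert (a * (s * s) <= a * (N * N)) by (apply Rmult_le_compat_l; nra). lra.
Qed.

Lemma int_powabs_ge0 f s : continuous_everywhere f -> 0 <= s -> 0 <= int_powabs f s.
Proof.
  intros H Hs. apply RInt0_ge0; [apply continuous_everywhere_powabs, H | exact Hs|].
  intros; apply powabs_ge0.
Qed.

Lemma int_powabs_ge_neg1 f s : admissible f -> alpha <= s -> -1 <= int_powabs f s.
Proof.
  intros Hf Hs. pose proof Hf as [H [Hneg _]]. pose proof alpha_bounds.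
  destruct (Rle_dec 0 s); [pose proof (int_powabs_ge0 f s H ltac:(lra)); lra|].
  assert (Hint : Rabs (int_powabs f s) <= 1 * Rabs s).
  { apply abs_RInt0_le_const; [apply continuous_everywhere_powabs, H|].
    intros r Hr. rewrite Rmin_right, Rmax_left in Hr by lra.
    rewrite Rabs_pos_eq by apply powabs_ge0.
    eapply Rle_trans; [apply powabs_le_Rabs; auto; apply Hneg; lra | apply Hneg; lra]. }
  rewrite (Rabs_left s) in Hint by lra. apply Rabs_le_between in Hint. lra.
Qed.

Lemma picard_d2_gt0 f t : 0 < picard_d2 f t.
Proof. unfold picard_d2. pose proof (exp_pos (- c * int_powabs f t)). nra. Qed.

Lemma picard_d2_le_exp f s : admissible f -> alpha <= s -> picard_d2 f s <= a * exp c.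
Proof.
  intros Hf Hs. pose proof (int_powabs_ge_neg1 f s Hf Hs).
  apply Rmult_le_compat_l; [lra|]. apply exp_le_exp. nra.
Qed.

Lemma picard_d2_le f s : continuous_everywhere f -> 0 <= s -> picard_d2 f s <= a.
Proof.
  intros H Hs. pose proof (int_powabs_ge0 f s H Hs). unfold picard_d2.
  rewrite <- (Rmult_1_r a) at 2. apply Rmult_le_compat_l; [lra|].
  rewrite <- exp_0. apply exp_le_exp. nra.
Qed.

(* Freezing the argument below [alpha] keeps the iterates continuous on all of [R]. *)
Definition picard_clamped f t := picard f (Rmax alpha t).

Lemma abs_picard_le f t B : continuous_everywhere f ->
  (forall s, Rmin 0 t <= s <= Rmax 0 t -> picard_d2 f s <= B) ->
  Rabs (picard f t) <= B * (t * t).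
Proof.
  intros H HB.
  assert (hB : 0 <= B) by (pose proof (picard_d2_gt0 f 0); specialize (HB 0);
                           unfold Rmin, Rmax in HB; destruct Rle_dec; lra).
  eapply Rle_trans; [apply (abs_RInt0_le_const _ _ (B * Rabs t))|].
  - apply continuous_everywhere_picard_d1, H.
  - intros r Hr. eapply Rle_trans; [apply abs_RInt0_le_const|].
    + apply continuous_everywhere_picard_d2, H.
    + intros q Hq. pose proof (picard_d2_gt0 f q). rewrite Rabs_pos_eq by lra.
      apply HB. unfold Rmin, Rmax in *; repeat destruct Rle_dec; lra.
    + apply Rmult_le_compat_l; [exact hB|].
      unfold Rmin, Rmax in Hr; destruct Rle_dec; apply Rabs_le; split_Rabs; lra.
  - rewrite Rmult_assoc, <- Rabs_mult, Rabs_pos_eq by nra. lra.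
Qed.

Lemma admissible_picard_clamped f : admissible f -> admissible (picard_clamped f).
Proof.
  intros Hf. pose proof Hf as [H _]. pose proof alpha_bounds as [Halpha Halpha2].
  split; [|split].
  - intros t. apply (continuous_comp (fun t => Rmax alpha t) (picard f));
      [apply continuous_Rmax_l | apply continuous_everywhere_picard, H].
  - intros s Hs. unfold picard_clamped. rewrite Rmax_right by lra.
    eapply Rle_trans; [apply (abs_picard_le f s (a * exp c) H)|].
    + intros q Hq. apply picard_d2_le_exp; [exact Hf|].
      unfold Rmin, Rmax in Hq; destruct Rle_dec; lra.
    + pose proof (exp_pos c).
      assert (s * s <= alpha * alpha) by nra.
      assert (a * exp c * (s * s) <= a * exp c * (alpha * alpha)) by (apply Rmult_le_compat_l; nra).
      lra.
  - intros s Hs. unfold picard_clamped. rewrite Rmax_right by lra.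
    apply abs_picard_le; [exact H|]. intros q Hq. apply picard_d2_le; [exact H|].
    unfold Rmin, Rmax in Hq; destruct Rle_dec; lra.
Qed.

(* Lipschitz constant of [powabs] on the range [[-M, M]], [M = 1 + a N^2], of
   admissible functions over [[alpha, N]]. *)
Definition powabs_lip N := p * Rpower (1 + a * (N * N)) (p - 1).

Definition contraction_weight N := 1 + 2 * (a * exp c * c * powabs_lip N).

Lemma powabs_lip_ge0 N : 0 <= powabs_lip N.
Proof. unfold powabs_lip. pose proof (Rpower_gt0 (1 + a * (N * N)) (p - 1)). nra. Qed.

Lemma contraction_weight_ge1 N : 1 <= contraction_weight N.
Proof.
  unfold contraction_weight. pose proof (exp_pos c). pose proof (powabs_lip_ge0 N).
  assert (0 <= a * exp c * c * powabs_lip N) by (apply Rmult_le_pos; [apply Rmult_le_pos|]; nra).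
  lra.
Qed.

Lemma exp_close_int_powabs N L e f g : 0 <= N -> 0 < L -> 0 <= e ->
  admissible f -> admissible g -> exp_close alpha N L e f g ->
  exp_close alpha N L (powabs_lip N * e / L) (int_powabs f) (int_powabs g).
Proof.
  intros hN hL he Hf Hg Hfg. pose proof alpha_bounds as [Halpha _].
  pose proof (powabs_lip_ge0 N).
  apply exp_close_RInt0; [lra | exact hL | apply Rmult_le_pos; lra
    | apply continuous_everywhere_powabs, Hf | apply continuous_everywhere_powabs, Hg|].
  intros s Hs. cbv beta.
  eapply Rle_trans; [apply (powabs_lipschitz p hp (1 + a * (N * N)));
    [nra | apply (admissible_le f N s Hf hN Hs) | apply (admissible_le g N s Hg hN Hs)]|].
  change (p * Rpower (1 + a * (N * N)) (p - 1)) with (powabs_lip N).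
  rewrite Rmult_assoc. apply Rmult_le_compat_l; [lra | apply Hfg, Hs].
Qed.

Lemma exp_close_picard_d2 N L e f g : admissible f -> admissible g ->
  exp_close alpha N L e (int_powabs f) (int_powabs g) ->
  exp_close alpha N L (a * exp c * c * e) (picard_d2 f) (picard_d2 g).
Proof.
  intros Hf Hg Hfg s Hs. unfold picard_d2.
  pose proof (exp_pos c).
  replace (a * exp (- c * int_powabs f s) - a * exp (- c * int_powabs g s))
    with (a * (exp (- c * int_powabs f s) - exp (- c * int_powabs g s))) by ring.
  rewrite Rabs_mult, (Rabs_pos_eq a) by lra.
  eapply Rle_trans.
  { apply Rmult_le_compat_l; [lra|]. apply (exp_lipschitz c);
      [pose proof (int_powabs_ge_neg1 f s Hf ltac:(lra))
      | pose proof (int_powabs_ge_neg1 g s Hg ltac:(lra))]; nra. }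
  replace (- c * int_powabs f s - - c * int_powabs g s)
    with (c * (int_powabs g s - int_powabs f s)) by ring.
  rewrite Rabs_mult, (Rabs_pos_eq c), Rabs_minus_sym by lra.
  pose proof (Hfg s Hs).
  replace (a * exp c * c * e * exp (L * Rabs s))
    with (a * exp c * (c * (e * exp (L * Rabs s)))) by ring.
  rewrite <- Rmult_assoc.
  apply Rmult_le_compat_l; [nra|]. apply Rmult_le_compat_l; lra.
Qed.

(* In the weighted norm [sup |f s| exp (- L |s|)] each of the three integrations gains
   a factor [1/L], which beats the Lipschitz constants once [L] is large. *)
Lemma picard_contraction N f g e : 0 <= N -> 0 <= e -> admissible f -> admissible g ->
  exp_close alpha N (contraction_weight N) e f g ->
  exp_close alpha N (contraction_weight N) (e / 2) (picard f) (picard g).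
Proof.
  intros hN he Hf Hg Hfg. pose proof alpha_bounds as [Halpha _].
  pose proof (Hf) as [cf _]. pose proof (Hg) as [cg _].
  set (K := a * exp c * c * powabs_lip N).
  set (L := contraction_weight N).
  assert (hK : 0 <= K) by (unfold K; pose proof (exp_pos c); pose proof (powabs_lip_ge0 N);
                           apply Rmult_le_pos; [|lra]; apply Rmult_le_pos; nra).
  assert (hL : 0 < L) by (unfold L, contraction_weight; fold K; lra).
  assert (Hd2 := exp_close_picard_d2 _ _ _ _ _ Hf Hg
                   (exp_close_int_powabs N L e f g hN hL he Hf Hg Hfg)).
  replace (a * exp c * c * (powabs_lip N * e / L)) with (K * e / L) in Hd2 by (unfold K; field; lra).
  assert (Hd1 := exp_close_RInt0 alpha N L (K * e / L) _ _ ltac:(lra) hL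
                   ltac:(apply Rdiv_le_0_compat; nra)
                   (continuous_everywhere_picard_d2 f cf) (continuous_everywhere_picard_d2 g cg) Hd2).
  assert (Hx := exp_close_RInt0 alpha N L (K * e / L / L) _ _ ltac:(lra) hL
                  ltac:(apply Rdiv_le_0_compat; [apply Rdiv_le_0_compat|]; nra)
                  (continuous_everywhere_picard_d1 f cf) (continuous_everywhere_picard_d1 g cg) Hd1).
  intros t Ht. eapply Rle_trans; [apply Hx, Ht|].
  apply Rmult_le_compat_r; [left; apply exp_pos|].
  assert (K / L <= 1 / 2) by (apply Rle_div_l; unfold L, contraction_weight; fold K; lra).
  assert (1 <= L) by (unfold L, contraction_weight; fold K; lra).
  assert (1 <= L * L) by nra.
  assert (e / (L * L) <= e) by (apply Rle_div_l; [lra | nra]).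
  assert (0 <= K / L) by (apply Rdiv_le_0_compat; lra).
  assert (0 <= e / (L * L)) by (apply Rdiv_le_0_compat; nra).
  replace (K * e / L / L / L) with ((K / L) * (e / (L * L))) by (field; lra).
  nra.
Qed.

Fixpoint picard_iter (n : nat) : R -> R :=
  match n with O => fun _ => 0 | S k => picard_clamped (picard_iter k) end.

Lemma admissible_picard_iter n : admissible (picard_iter n).
Proof.
  induction n as [|n IH]; [|apply admissible_picard_clamped, IH].
  split; [intros s; apply continuous_const|split]; intros s Hs; simpl; rewrite Rabs_R0; [lra|].
  apply Rmult_le_pos; [lra|nra].
Qed.

Lemma picard_iter_S n t : alpha <= t -> picard_iter (S n) t = picard (picard_iter n) t.
Proof. intros H. simpl. unfold picard_clamped. rewrite Rmax_right by lra. reflexivity. Qed.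

Lemma picard_iter_clamp n t : picard_iter n (Rmax alpha t) = picard_iter n t.
Proof. destruct n; [reflexivity|]. simpl. unfold picard_clamped. rewrite Rmax_idem_l. reflexivity. Qed.

Lemma picard_iter_step N : 0 <= N -> exists K, forall n t, t <= N ->
  Rabs (picard_iter (S n) t - picard_iter n t) <= K * (1/2)^n.
Proof.
  intros hN. pose proof alpha_bounds as [Halpha _].
  set (L := contraction_weight N). set (M := 1 + a * (N * N)).
  pose proof (contraction_weight_ge1 N) as hL. fold L in hL.
  assert (hM : 0 < M) by (unfold M; assert (0 <= a * (N * N)) by (apply Rmult_le_pos; nra); lra).
  assert (Hclose : forall n, exp_close alpha N L (M * (1/2)^n) (picard_iter (S n)) (picard_iter n)).
  { induction n as [|n IH]; intros t Ht.
    - rewrite Rminus_0_r, pow_O, Rmult_1_r.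
      assert (Rabs (picard_iter 1 t) <= M)
        by exact (admissible_le _ N t (admissible_picard_iter 1) hN Ht).
      pose proof (exp_ge1 (L * Rabs t) ltac:(pose proof (Rabs_pos t); nra)).
      nra.
    - rewrite (picard_iter_S (S n)), (picard_iter_S n) by lra.
      replace (M * (1/2)^(S n)) with (M * (1/2)^n / 2) by (simpl; field).
      apply picard_contraction; auto using admissible_picard_iter.
      apply Rmult_le_pos; [lra | apply pow_half_ge0]. }
  exists (M * exp (L * (N + 1))). intros n t Ht.
  rewrite <- (picard_iter_clamp (S n)), <- (picard_iter_clamp n).
  assert (Hclamp : alpha <= Rmax alpha t <= N) by (split; [apply Rmax_l | apply Rmax_lub; lra]).
  eapply Rle_trans; [apply Hclose, Hclamp|].
  assert (Rabs (Rmax alpha t) <= N + 1) by (apply Rabs_le; lra).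
  assert (exp (L * Rabs (Rmax alpha t)) <= exp (L * (N + 1))) by (apply exp_le_exp; nra).
  assert (0 <= M * (1/2)^n) by (apply Rmult_le_pos; [lra | apply pow_half_ge0]).
  replace (M * exp (L * (N + 1)) * (1/2)^n) with (M * (1/2)^n * exp (L * (N + 1))) by ring.
  apply Rmult_le_compat_l; assumption.
Qed.

Definition picard_limit t := real (Lim_seq (fun n => picard_iter n t)).

Lemma picard_limit_cvg N : 0 <= N -> exists K, forall t, t <= N ->
  is_lim_seq (fun n => picard_iter n t) (picard_limit t) /\
  forall n, Rabs (picard_limit t - picard_iter n t) <= K * (1/2)^n.
Proof.
  intros hN. destruct (picard_iter_step N hN) as [K HK].
  exists (2 * K). intros t Ht.
  destruct (geometric_cauchy_cvg (fun n => picard_iter n t) K (fun n => HK n t Ht)) as [l [Hl Hbound]].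
  assert (Hlimit : picard_limit t = l)
    by (unfold picard_limit; rewrite (is_lim_seq_unique _ _ Hl); reflexivity).
  rewrite Hlimit.
  split; [exact Hl | exact Hbound].
Qed.

Lemma continuous_everywhere_picard_limit : continuous_everywhere picard_limit.
Proof.
  intros t0. set (N := Rabs t0 + 1).
  assert (hN : 0 <= N) by (unfold N; pose proof (Rabs_pos t0); lra).
  destruct (picard_limit_cvg N hN) as [K HK].
  apply filterlim_locally. intros eps.
  assert (he3 : 0 < eps / 3) by (pose proof (cond_pos eps); lra).
  destruct (pow_half_small K (eps / 3) he3) as [n Hn].
  pose proof (Rle_abs K). pose proof (pow_half_ge0 n).
  pose proof (proj1 (admissible_picard_iter n) t0) as Hcont.
  destruct (proj1 (filterlim_locally _ _) Hcont (mkposreal _ he3)) as [d Hd].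
  assert (hd : 0 < Rmin d 1) by (apply Rmin_pos; [apply cond_pos | lra]).
  exists (mkposreal _ hd). intros y Hy.
  change (Rabs (y - t0) < Rmin d 1) in Hy. change (Rabs (picard_limit y - picard_limit t0) < eps).
  pose proof (Rmin_l d 1). pose proof (Rmin_r d 1).
  specialize (Hd y ltac:(change (Rabs (y - t0) < d); lra)).
  change (Rabs (picard_iter n y - picard_iter n t0) < eps / 3) in Hd.
  assert (yN : y <= N) by (unfold N; apply Rabs_def2 in Hy; pose proof (Rle_abs t0); lra).
  assert (tN : t0 <= N) by (unfold N; pose proof (Rle_abs t0); lra).
  pose proof (proj2 (HK y yN) n). pose proof (proj2 (HK t0 tN) n).
  replace (picard_limit y - picard_limit t0) with
    ((picard_limit y - picard_iter n y) + (picard_iter n y - picard_iter n t0)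
     - (picard_limit t0 - picard_iter n t0)) by ring.
  eapply Rle_lt_trans; [apply Rabs_triang|]. rewrite Rabs_Ropp.
  eapply Rle_lt_trans; [apply Rplus_le_compat_r, Rabs_triang|]. nra.
Qed.

Lemma admissible_picard_limit : admissible picard_limit.
Proof.
  assert (Hpass : forall s B, (forall n, Rabs (picard_iter n s) <= B) -> Rabs (picard_limit s) <= B).
  { intros s B HB. destruct (picard_limit_cvg (Rabs s) (Rabs_pos s)) as [K HK].
    apply (le_of_le_geom _ _ K). intros n.
    pose proof (proj2 (HK s (Rle_abs s)) n). pose proof (HB n).
    pose proof (Rabs_triang_inv (picard_limit s) (picard_iter n s)). lra. }
  split; [apply continuous_everywhere_picard_limit | split]; intros s Hs; apply Hpass; intros n.
  - apply (admissible_picard_iter n), Hs.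
  - apply (admissible_picard_iter n), Hs.
Qed.

Lemma picard_limit_fixed t : alpha <= t -> picard_limit t = picard picard_limit t.
Proof.
  intros Ht. set (N := Rabs t + 1).
  assert (hN : 0 <= N) by (unfold N; pose proof (Rabs_pos t); lra).
  assert (tN : alpha <= t <= N) by (unfold N; pose proof (Rle_abs t); lra).
  destruct (picard_limit_cvg N hN) as [K HK].
  set (L := contraction_weight N). set (E := exp (L * Rabs t)).
  assert (hE : 0 < E) by apply exp_pos.
  pose proof (contraction_weight_ge1 N) as hL. fold L in hL.
  assert (Hclose : forall n, exp_close alpha N L (Rabs K * (1/2)^n) picard_limit (picard_iter n)).
  { intros n s Hs. pose proof (proj2 (HK s ltac:(lra)) n). pose proof (Rle_abs K).
    pose proof (exp_ge1 (L * Rabs s) ltac:(pose proof (Rabs_pos s); nra)).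
    pose proof (pow_half_ge0 n).
    assert (K * (1/2)^n <= Rabs K * (1/2)^n) by (apply Rmult_le_compat_r; assumption).
    assert (0 <= Rabs K * (1/2)^n) by (apply Rmult_le_pos; [apply Rabs_pos | assumption]).
    nra. }
  assert (Hgeom : forall n,
            Rabs (picard_limit t - picard picard_limit t) <= 0 + Rabs K * (1 + E) * (1/2)^n).
  { intros n.
    pose proof (picard_contraction N _ _ _ hN
                  ltac:(apply Rmult_le_pos; [apply Rabs_pos | apply pow_half_ge0])
                  admissible_picard_limit (admissible_picard_iter n) (Hclose n) t tN) as Hpic.
    pose proof (proj2 (HK t ltac:(lra)) (S n)) as Hiter.
    rewrite picard_iter_S in Hiter by lra. simpl pow in Hiter.
    pose proof (pow_half_ge0 n).
    assert (K * (1/2)^n <= Rabs K * (1/2)^n) by (apply Rmult_le_compat_r; [assumption | apply Rle_abs]).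
    assert (0 <= Rabs K * (1/2)^n) by (apply Rmult_le_pos; [apply Rabs_pos | assumption]).
    replace (K * (1/2 * (1/2)^n)) with (K * (1/2)^n / 2) in Hiter by field.
    replace (Rabs K * (1 + E) * (1/2)^n) with (Rabs K * (1/2)^n + Rabs K * (1/2)^n * E) by ring.
    replace (picard_limit t - picard picard_limit t) with
      ((picard_limit t - picard (picard_iter n) t)
       - (picard picard_limit t - picard (picard_iter n) t)) by ring.
    eapply Rle_trans; [apply Rabs_triang|]. rewrite Rabs_Ropp. fold L E in Hpic. nra. }
  apply Rminus_diag_uniq, Rabs_eq_0, Rle_antisym;
    [exact (le_of_le_geom _ _ _ Hgeom) | apply Rabs_pos].
Qed.

End Picard.

Theorem lemma1 (p c a : R) (hp : 1 <= p) (hc : 0 < c) (ha : 0 < a) :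
  exists (alpha : R) (x x1 x2 : R -> R),
    alpha < 0 /\
    (forall t, alpha < t ->
       is_derive x t (x1 t) /\ is_derive x1 t (x2 t) /\
       is_derive x2 t (- (c * powabs (x t) p * x2 t))) /\
    x 0 = 0 /\ x1 0 = 0 /\ x2 0 = a.
Proof.
  set (z := picard_limit p c a).
  assert (Hz : continuous_everywhere z) by apply (continuous_everywhere_picard_limit p c a hp hc ha).
  exists (alpha c a), (picard p c a z), (picard_d1 p c a z), (picard_d2 p c a z).
  split; [apply alpha_bounds; assumption | split; [| split; [| split]]].
  - intros t Ht.
    assert (Hfix : z t = picard p c a z t) by (apply picard_limit_fixed; auto; lra).
    split; [apply is_derive_picard; auto | split; [apply is_derive_picard_d1; auto|]].
    rewrite <- Hfix. apply is_derive_picard_d2; auto.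
  - unfold picard. rewrite RInt_point. reflexivity.
  - unfold picard_d1. rewrite RInt_point. reflexivity.
  - unfold picard_d2, int_powabs. rewrite RInt_point. change (a * exp (- c * 0) = a).
    rewrite Rmult_0_r, exp_0. ring.
Qed.
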